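(* Let $S[1..n]$ be a string and let $\mathrm{LLRc}[1..m]$ be the array of its useful LLRs, given as pairs $(start,end)$ in increasing order of start position, with $m\ge 1$. Then the values $L_1,\ldots,L_n$ and $R_1,\ldots,R_n$ can be computed in $O(n)$ time and space, where $L_y=\min\{i\mid \mathrm{LLRc}[i].end\ge y\}$ if this set is nonempty and $L_y=-1$ otherwise, and $R_x=\max\{i\mid \mathrm{LLRc}[i].start\le x\}$ if this set is nonempty and $R_x=-1$ otherwise.
   Context: For $1\le i\le j\le n$, $S[i..j]=S[i]\cdots S[j]$. A substring is unique if it has no other occurrence starting at a different position; it is a repeat otherwise. The left-bounded longest repeat starting at position $k$, $\mathrm{LLR}_k$, is a repeat $S[k..j]$ such that either $j=n$ or $S[k..j+1]$ is unique (it does not exist if $S[k]$ is unique). An LLR is useless if its position interval is contained in that of another LLR; otherwise it is useful. In $\mathrm{LLRc}$ both start and end positions are strictly increasing. Complexity is in the word-RAM model with each integer in $\{-1,0,\ldots,n+1\}$ occupying a constant number of words. *)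

From mathcomp Require Import all_boot all_order all_algebra ssrint.
Set Implicit Arguments. Unset Strict Implicit. Unset Printing Implicit Defensive.
Import Order.TTheory GRing.Theory Num.Theory.

(* Strings, repeats, LLRs (positions are 1-based, S[i] = nth 0 S i.-1) *)

(* S[i..j] for 1 <= i <= j <= n *)
Definition substr (S : seq nat) (i j : nat) : seq nat :=
  take (j.+1 - i) (drop i.-1 S).

Definition is_repeat (S : seq nat) (i j : nat) : Prop :=
  [/\ 1 <= i, i <= j, j <= size S &
      exists i', [/\ i' != i, 1 <= i', i' + (j - i) <= size S &
                   substr S i' (i' + (j - i)) = substr S i j]].

Definition is_unique (S : seq nat) (i j : nat) : Prop :=
  [/\ 1 <= i, i <= j, j <= size S & ~ is_repeat S i j].

Definition LLR (S : seq nat) (k j : nat) : Prop :=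
  is_repeat S k j /\ (j = size S \/ is_unique S k j.+1).

Definition useful_LLR (S : seq nat) (k j : nat) : Prop :=
  LLR S k j /\
  ~ (exists k' j', [/\ LLR S k' j', (k', j') <> (k, j), k' <= k & j <= j']).

Definition LLRc_of (S : seq nat) (A : seq (nat * nat)) : Prop :=
  sorted ltn (map fst A) /\ (forall p, p \in A <-> useful_LLR S p.1 p.2).

Definition LLRc_at (A : seq (nat * nat)) (i : nat) : nat * nat :=
  nth (0, 0) A i.-1.

Definition Lval (A : seq (nat * nat)) (y : nat) (v : int) : Prop :=
  (v = (-1)%R /\ forall i, 1 <= i <= size A -> ~ (y <= (LLRc_at A i).2))
  \/ exists i, [/\ 1 <= i <= size A, y <= (LLRc_at A i).2,
       (forall i', 1 <= i' <= size A -> y <= (LLRc_at A i').2 -> i <= i')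
     & v = Posz i].

Definition Rval (A : seq (nat * nat)) (x : nat) (v : int) : Prop :=
  (v = (-1)%R /\ forall i, 1 <= i <= size A -> ~ ((LLRc_at A i).1 <= x))
  \/ exists i, [/\ 1 <= i <= size A, (LLRc_at A i).1 <= x,
       (forall i', 1 <= i' <= size A -> (LLRc_at A i').1 <= x -> i' <= i)
     & v = Posz i].

Inductive instr : Type :=
| IConst of nat & int
| IAdd of nat & nat & nat
| ISub of nat & nat & nat
| ILoad of nat & nat
| IStore of nat & nat
| IJlt of nat & nat & nat
| IJmp of nat.

Record config := Config { pc : nat; memory : nat -> int }.

Definition upd (m : nat -> int) (a : nat) (v : int) : nat -> int :=
  fun x => if x == a then v else m x.

(* None = stuck (negative address); Some w = performs write w (if any) *)
Definition write_of (i : instr) (m : nat -> int) : option (option (nat * int)) :=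
  match i with
  | IConst a v => Some (Some (a, v))
  | IAdd a b c => Some (Some (a, (m b + m c)%R))
  | ISub a b c => Some (Some (a, (m b - m c)%R))
  | ILoad a b => if (0 <= m b)%R then Some (Some (a, m (absz (m b)))) else None
  | IStore a b => if (0 <= m a)%R then Some (Some (absz (m a), m b)) else None
  | IJlt _ _ _ => Some None
  | IJmp _ => Some None
  end.

Definition next_pc (i : instr) (m : nat -> int) (p : nat) : nat :=
  match i with
  | IJlt a b l => if (m a < m b)%R then l else p.+1
  | IJmp l => l
  | _ => p.+1
  end.

Definition program := seq instr.

Definition halted (P : program) (c : config) : bool := size P <= pc c.

Definition cur (P : program) (c : config) : instr := nth (IJmp 0) P (pc c).

Definition step (P : program) (c : config) : option config :=
  match write_of (cur P c) (memory c) with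
  | None => None
  | Some w =>
      Some (Config (next_pc (cur P c) (memory c) (pc c))
                   (match w with None => memory c | Some (a, v) => upd (memory c) a v end))
  end.

Definition step_write (P : program) (c : config) : option (nat * int) :=
  match write_of (cur P c) (memory c) with Some w => w | None => None end.

Fixpoint run (P : program) (t : nat) (c : config) : option config :=
  match t with
  | 0 => Some c
  | t'.+1 => if halted P c then Some c else obind (run P t') (step P c)
  end.

(* Input layout: mem[0] = n, mem[1] = m, mem[2..n+1] = S[1..n],
   mem[n+2+2(i-1)] = LLRc[i].start, mem[n+3+2(i-1)] = LLRc[i].end,
   everything else 0. *)
Definition init_mem (S : seq nat) (A : seq (nat * nat)) : nat -> int :=
  fun a =>
    if a == 0 then Posz (size S)
    else if a == 1 then Posz (size A)
    else if a < size S + 2 then Posz (nth 0 S (a - 2))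
    else if a < size S + 2 + 2 * size A then
      Posz (let t := a - (size S + 2) in
            let p := nth (0, 0) A t./2 in
            if odd t then p.2 else p.1)
    else Posz 0.

Definition init_config (S : seq nat) (A : seq (nat * nat)) : config :=
  Config 0 (init_mem S A).

Definition outL (S : seq nat) (A : seq (nat * nat)) (y : nat) : nat :=
  size S + 2 + 2 * size A + y.-1.
Definition outR (S : seq nat) (A : seq (nat * nat)) (x : nat) : nat :=
  size S + 2 + 2 * size A + size S + x.-1.

(* magnitude of input values: words hold O(1) such values *)
Definition in_bound (S : seq nat) : nat := size S + 2 + foldr maxn 0 S.

From mathcomp Require Import all_boot all_order all_algebra ssrint.
From mathcomp Require Import zify.
From Stdlib Require Import FunctionalExtensionality.
Import Order.TTheory GRing.Theory Num.Theory.
Set Implicit Arguments. Unset Strict Implicit. Unset Printing Implicit Defensive.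

(** The program has three phases.  A pass over LLRc[1..m] writes i into
    bucket R[start_i] and m+1-i into bucket L[end_i] (keeping the larger
    value).  A left-to-right prefix maximum over R then yields
    R_x = max {i | start_i <= x}, and a right-to-left suffix maximum over L
    yields m+1-L_y, since the smallest admissible i carries the largest
    m+1-i.  An empty maximum is 0 and is output as -1.  The starts are
    distinct positions of S, so m <= n and the running time is O(n). *)

Lemma run_halted P t c : halted P c -> run P t c = Some c.
Proof. by move=> H; case: t => //= t; rewrite H. Qed.

Lemma run_add P t1 t2 c :
  run P (t1 + t2) c = obind (run P t2) (run P t1 c).
Proof.
elim: t1 c => [|t1 IH] c //=.
case Hh: (halted P c) => /=; first by rewrite run_halted.
by case: (step P c) => //= c'; rewrite IH.
Qed.

Definition safe_run P (W : nat -> int -> Prop) c t c' :=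
  run P t c = Some c' /\
  forall t' c'', t' < t -> run P t' c = Some c'' ->
    forall a v, step_write P c'' = Some (a, v) -> W a v.

Lemma safe_run_cat P W c t1 c1 t2 c2 :
  safe_run P W c t1 c1 -> safe_run P W c1 t2 c2 -> safe_run P W c (t1 + t2) c2.
Proof.
move=> [R1 W1] [R2 W2]; split; first by rewrite run_add R1.
move=> t' c'' Ht Hr.
case: (ltnP t' t1) => Ht1; first exact: W1 Ht1 Hr.
apply: (W2 (t' - t1)); first lia.
by rewrite -(subnKC Ht1) run_add R1 /= in Hr.
Qed.

Lemma safe_run_step P W c c1 :
  pc c < size P -> step P c = Some c1 ->
  (forall a v, step_write P c = Some (a, v) -> W a v) -> safe_run P W c 1 c1.
Proof.
move=> Hp Hs Hw; split; first by rewrite /= /halted leqNgt Hp /= Hs.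
by move=> [|//] c'' _ [<-].
Qed.

Definition reach P W c T (F : config -> Prop) :=
  exists cf t, [/\ t <= T, safe_run P W c t cf & F cf].

Lemma reach_refl P W c T (F : config -> Prop) : F c -> reach P W c T F.
Proof. by move=> H; exists c, 0; split => //; split => // t' c''; rewrite ltn0. Qed.

Lemma reach_mono P W c T T' F : T <= T' -> reach P W c T F -> reach P W c T' F.
Proof. by move=> H [cf [t [Ht G HF]]]; exists cf, t; split => //; apply: leq_trans H. Qed.

Lemma reach_step P W c c1 T F :
  pc c < size P -> step P c = Some c1 ->
  (forall a v, step_write P c = Some (a, v) -> W a v) ->
  reach P W c1 T F -> reach P W c T.+1 F.
Proof.
move=> Hp Hs Hw [cf [t [Ht G HF]]]; exists cf, (1 + t); split => //.
exact: safe_run_cat (safe_run_step Hp Hs Hw) G.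
Qed.

Lemma reach_loop P W (I : nat -> config -> Prop) N T T' F c :
  (forall k c T' F, k < N -> I k c -> (forall c', I k.+1 c' -> reach P W c' T' F) ->
     reach P W c (T + T') F) ->
  (forall c', I N c' -> reach P W c' T' F) -> I 0 c -> reach P W c (T * N + T') F.
Proof.
move=> body K; suff loop d c' : d <= N -> I (N - d) c' -> reach P W c' (T * d + T') F.
  by move=> I0; apply: loop => //; rewrite subnn.
elim: d c' => [|d IH] c' Hd HI; first by rewrite muln0; apply: K; rewrite subn0 in HI.
apply: reach_mono (body (N - d.+1) c' (T * d + T') F _ HI _); [lia | lia |].
by move=> c'' Hc''; apply: IH; [lia | rewrite (_ : N - d = (N - d.+1).+1) //; lia].
Qed.

Definition code_at (P : program) l (Q : program) :=
  l + size Q <= size P /\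
  forall j, j < size Q -> nth (IJmp 0) P (l + j) = nth (IJmp 0) Q j.

Section Instr.
Variables (P Q : program) (W : nat -> int -> Prop) (l : nat).
Hypothesis HC : code_at P l Q.

Lemma reach_instr j M i w T F :
  j < size Q -> nth (IJmp 0) Q j = i -> write_of i M = Some w ->
  (if w is Some (a, v) then W a v else True) ->
  reach P W (Config (next_pc i M (l + j))
               (if w is Some (a, v) then upd M a v else M)) T F ->
  reach P W (Config (l + j) M) T.+1 F.
Proof.
move=> Hj Hq Hwr Hw; have Hcur : cur P (Config (l + j) M) = i by rewrite /cur /= HC.2.
apply: reach_step; first by rewrite /=; have := HC.1; lia.
  by rewrite /step Hcur /= Hwr.
by rewrite /step_write Hcur /= Hwr; case: w Hw {Hwr} => // -[a v] Hw _ _ [<- <-].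
Qed.

Lemma reach_const j M a v T F :
  j < size Q -> nth (IJmp 0) Q j = IConst a v -> W a v ->
  reach P W (Config (l + j.+1) (upd M a v)) T F ->
  reach P W (Config (l + j) M) T.+1 F.
Proof.
by move=> Hj Hq Hw HF; apply: (reach_instr (w := Some (a, v)) Hj Hq); rewrite //= -addnS.
Qed.

Lemma reach_add j M a b c T F :
  j < size Q -> nth (IJmp 0) Q j = IAdd a b c -> W a (M b + M c)%R ->
  reach P W (Config (l + j.+1) (upd M a (M b + M c)%R)) T F ->
  reach P W (Config (l + j) M) T.+1 F.
Proof.
by move=> Hj Hq Hw HF; apply: (reach_instr (w := Some (a, _)) Hj Hq); rewrite //= -addnS.
Qed.

Lemma reach_sub j M a b c T F :
  j < size Q -> nth (IJmp 0) Q j = ISub a b c -> W a (M b - M c)%R ->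
  reach P W (Config (l + j.+1) (upd M a (M b - M c)%R)) T F ->
  reach P W (Config (l + j) M) T.+1 F.
Proof.
by move=> Hj Hq Hw HF; apply: (reach_instr (w := Some (a, _)) Hj Hq); rewrite //= -addnS.
Qed.

Lemma reach_load j M a b x T F :
  j < size Q -> nth (IJmp 0) Q j = ILoad a b -> M b = Posz x -> W a (M x) ->
  reach P W (Config (l + j.+1) (upd M a (M x))) T F ->
  reach P W (Config (l + j) M) T.+1 F.
Proof.
move=> Hj Hq Hb Hw HF; apply: (reach_instr (w := Some (a, M x)) Hj Hq); rewrite //= -?addnS //.
by rewrite Hb.
Qed.

Lemma reach_store j M a b x T F :
  j < size Q -> nth (IJmp 0) Q j = IStore a b -> M a = Posz x -> W x (M b) ->
  reach P W (Config (l + j.+1) (upd M x (M b))) T F ->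
  reach P W (Config (l + j) M) T.+1 F.
Proof.
move=> Hj Hq Hb Hw HF; apply: (reach_instr (w := Some (x, M b)) Hj Hq); rewrite //= -?addnS //.
by rewrite Hb.
Qed.

Lemma reach_jlt_taken j M a b lab T F :
  j < size Q -> nth (IJmp 0) Q j = IJlt a b lab -> (M a < M b)%R ->
  reach P W (Config lab M) T F ->
  reach P W (Config (l + j) M) T.+1 F.
Proof. by move=> Hj Hq Hab HF; apply: (reach_instr (w := None) Hj Hq); rewrite //= Hab. Qed.

Lemma reach_jlt_next j M a b lab T F :
  j < size Q -> nth (IJmp 0) Q j = IJlt a b lab -> ~~ (M a < M b)%R ->
  reach P W (Config (l + j.+1) M) T F ->
  reach P W (Config (l + j) M) T.+1 F.
Proof.
by move=> Hj Hq Hab HF; apply: (reach_instr (w := None) Hj Hq); rewrite //= (negbTE Hab) -addnS.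
Qed.

Lemma reach_jmp j M lab T F :
  j < size Q -> nth (IJmp 0) Q j = IJmp lab ->
  reach P W (Config lab M) T F ->
  reach P W (Config (l + j) M) T.+1 F.
Proof. by move=> Hj Hq HF; apply: (reach_instr (w := None) Hj Hq). Qed.
End Instr.

(** Register [r + k] holds: k = 0, 1, 14, 15: the constants 1, 2, 0, -1;
    k = 3: the end n+2+2m of the input; k = 6, 7: [Lbase], [Rbase];
    k = 10: m+1; k = 2: the address of the current LLR and k = 4: its
    1-based index; k = 11, 12: the sweep pointer and its bound; k = 9: the
    running maximum; k = 5, 8, 13: scratch.  Jump targets are relative to
    the load address [l]; [e] is the exit. *)
Definition LR_code (r l e : nat) : program := [::
 (* 0 *) IConst (r+0) 1;
 (* 1 *) IConst (r+1) 2;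
 (* 2 *) IConst (r+14) 0;
 (* 3 *) IConst (r+15) (-1)%R;
 (* 4 *) IAdd (r+5) 0 (r+1);
 (* 5 *) IAdd (r+3) 1 1;
 (* 6 *) IAdd (r+3) (r+3) (r+5);
 (* 7 *) ISub (r+6) (r+3) (r+0);
 (* 8 *) IAdd (r+7) (r+6) 0;
 (* 9 *) IAdd (r+2) (r+5) (r+14);
 (* 10 *) IConst (r+4) 1;
 (* 11 *) IAdd (r+10) 1 (r+0);
 (* 12 *) IJlt (r+2) (r+3) (l+14);
 (* 13 *) IJmp (l+31);
 (* 14 *) ILoad (r+5) (r+2);
 (* 15 *) IAdd (r+5) (r+7) (r+5);
 (* 16 *) ILoad (r+8) (r+5);
 (* 17 *) IJlt (r+8) (r+4) (l+19);
 (* 18 *) IJmp (l+20);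
 (* 19 *) IStore (r+5) (r+4);
 (* 20 *) IAdd (r+5) (r+2) (r+0);
 (* 21 *) ILoad (r+5) (r+5);
 (* 22 *) IAdd (r+5) (r+6) (r+5);
 (* 23 *) ILoad (r+13) (r+5);
 (* 24 *) ISub (r+8) (r+10) (r+4);
 (* 25 *) IJlt (r+13) (r+8) (l+27);
 (* 26 *) IJmp (l+28);
 (* 27 *) IStore (r+5) (r+8);
 (* 28 *) IAdd (r+2) (r+2) (r+1);
 (* 29 *) IAdd (r+4) (r+4) (r+0);
 (* 30 *) IJmp (l+12);
 (* 31 *) IAdd (r+11) (r+7) (r+0);
 (* 32 *) IAdd (r+12) (r+7) 0;
 (* 33 *) IAdd (r+12) (r+12) (r+0);
 (* 34 *) IConst (r+9) 0;
 (* 35 *) IJlt (r+11) (r+12) (l+37);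
 (* 36 *) IJmp (l+47);
 (* 37 *) ILoad (r+8) (r+11);
 (* 38 *) IJlt (r+9) (r+8) (l+40);
 (* 39 *) IJmp (l+41);
 (* 40 *) IAdd (r+9) (r+8) (r+14);
 (* 41 *) IJlt (r+9) (r+0) (l+45);
 (* 42 *) IStore (r+11) (r+9);
 (* 43 *) IAdd (r+11) (r+11) (r+0);
 (* 44 *) IJmp (l+35);
 (* 45 *) IStore (r+11) (r+15);
 (* 46 *) IJmp (l+43);
 (* 47 *) IAdd (r+11) (r+6) 0;
 (* 48 *) IConst (r+9) 0;
 (* 49 *) IJlt (r+6) (r+11) (l+51);
 (* 50 *) IJmp e;
 (* 51 *) ILoad (r+8) (r+11);
 (* 52 *) IJlt (r+9) (r+8) (l+54);
 (* 53 *) IJmp (l+55);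
 (* 54 *) IAdd (r+9) (r+8) (r+14);
 (* 55 *) IJlt (r+9) (r+0) (l+60);
 (* 56 *) ISub (r+13) (r+10) (r+9);
 (* 57 *) IStore (r+11) (r+13);
 (* 58 *) ISub (r+11) (r+11) (r+0);
 (* 59 *) IJmp (l+49);
 (* 60 *) IStore (r+11) (r+15);
 (* 61 *) IJmp (l+58) ].

Definition setf (f : nat -> int) k v : nat -> int :=
  fun x => if x == k then v else f x.

Lemma bigmax_if_cases m (p : pred 'I_m) (g : 'I_m -> nat) :
  (forall i, 0 < g i) ->
  (\max_(i < m) (if p i then g i else 0) = 0 /\ forall i, ~~ p i) \/
  exists i0, [/\ p i0, \max_(i < m) (if p i then g i else 0) = g i0
                & forall i, p i -> g i <= g i0].
Proof.
move=> g_gt0; set F := fun i => if p i then g i else 0.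
have le_max i : p i -> g i <= \max_(i < m) F i.
  by move=> pi; have := leq_bigmax (F := F) i; rewrite /F pi.
have [max0|max_gt0] := posnP (\max_(i < m) F i).
  left; split => // i; apply/negP => pi.
  by have := le_max i pi; rewrite max0 leqNgt g_gt0.
have [i1 _] : exists i1 : 'I_m, true.
  apply/existsP; apply: contraTT max_gt0 => /existsPn none.
  by rewrite -leqNgt; apply/bigmax_leqP => i; have := none i.
have card_gt0 : 0 < #|'I_m| by apply/card_gt0P; exists i1.
have [i0 Ei0] := @bigop.eq_bigmax _ F card_gt0.
move: max_gt0; rewrite Ei0 /F; case: ifP => // pi0 _.
by right; exists i0; split => // i /le_max; rewrite Ei0 /F pi0.
Qed.

Section Correctness.
Variables (S : seq nat) (A : seq (nat * nat)).
Local Notation n := (size S).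
Local Notation m := (size A).
Definition lstart i := (nth (0,0) A i).1.
Definition lend i := (nth (0,0) A i).2.

(** Indices are 0-based; the bucket entries i+1 and m-i are positive, so 0
    marks an empty bucket. *)
Definition Rbucket k x := \max_(i < k) (if lstart i == x then i.+1 else 0).
Definition Lbucket k y := \max_(i < k) (if lend i == y then m - i else 0).

Lemma Rbucket_S k x : Rbucket k.+1 x = maxn (Rbucket k x) (if lstart k == x then k.+1 else 0).
Proof. by rewrite /Rbucket big_ord_recr. Qed.
Lemma Lbucket_S k y : Lbucket k.+1 y = maxn (Lbucket k y) (if lend k == y then m - k else 0).
Proof. by rewrite /Lbucket big_ord_recr. Qed.
Lemma Rbucket0 x : Rbucket 0 x = 0. Proof. by rewrite /Rbucket big_ord0. Qed.
Lemma Lbucket0 y : Lbucket 0 y = 0. Proof. by rewrite /Lbucket big_ord0. Qed.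
Lemma Rbucket_le k x : Rbucket k x <= k.
Proof. by apply/bigmax_leqP => i _; case: ifP => // _; apply: ltn_ord. Qed.
Lemma Lbucket_le k y : Lbucket k y <= m.
Proof. by apply/bigmax_leqP => i _; case: ifP => // _; apply: leq_subr. Qed.

Definition Rmax x := \max_(i < m) (if lstart i <= x then i.+1 else 0).
Definition Lmax y := \max_(i < m) (if y <= lend i then m - i else 0).

Lemma Rmax_S x : Rmax x.+1 = maxn (Rmax x) (Rbucket m x.+1).
Proof.
rewrite /Rmax /Rbucket -big_split /=; apply: eq_bigr => i _.
case: ifP => H1; case: ifP => H2; case: ifP => H3; lia.
Qed.

Lemma Lmax_S y : Lmax y = maxn (Lmax y.+1) (Lbucket m y).
Proof.
rewrite /Lmax /Lbucket -big_split /=; apply: eq_bigr => i _.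
case: ifP => H1; case: ifP => H2; case: ifP => H3; lia.
Qed.

Lemma Rmax_le x : Rmax x <= m.
Proof. by apply/bigmax_leqP => i _; case: ifP => // _; apply: ltn_ord. Qed.
Lemma Lmax_le y : Lmax y <= m.
Proof. by apply/bigmax_leqP => i _; case: ifP => // _; apply: leq_subr. Qed.

Definition Rresult x : int := if Rmax x == 0 then (-1)%R else Posz (Rmax x).
Definition Lresult y : int := if Lmax y == 0 then (-1)%R else Posz (m.+1 - Lmax y).

Lemma Rresult_correct x : Rval A x (Rresult x).
Proof.
rewrite /Rval /Rresult /Rmax /LLRc_at.
have [[-> none]|[i0 [pi0 -> max_i0]]] :=
  @bigmax_if_cases m (fun i => lstart i <= x) (fun i => i.+1) (fun _ => erefl).
  left; split => // i Hi Hs; have Hi' : i.-1 < m by lia.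
  by have := none (Ordinal Hi'); rewrite /= /lstart Hs.
right; exists i0.+1; split => //; first by rewrite /=; have := ltn_ord i0; lia.
move=> i Hi Hs; have Hi' : i.-1 < m by lia.
by have := max_i0 (Ordinal Hi') Hs; rewrite /=; lia.
Qed.

Lemma Lresult_correct y : Lval A y (Lresult y).
Proof.
rewrite /Lval /Lresult /Lmax /LLRc_at.
have [[-> none]|[i0 [pi0 -> max_i0]]] :=
  @bigmax_if_cases m (fun i => y <= lend i) (fun i => m - i)
    (fun i => etrans (subn_gt0 i m) (ltn_ord i)).
  left; split => // i Hi Hs; have Hi' : i.-1 < m by lia.
  by have := none (Ordinal Hi'); rewrite /= /lend Hs.
have lt_i0 := ltn_ord i0.
right; exists i0.+1; split => //; rewrite /= ?ifF; try lia.
move=> i Hi Hs; have Hi' : i.-1 < m by lia.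
by have := max_i0 (Ordinal Hi') Hs; rewrite /=; lia.
Qed.

Hypothesis hstart : forall i, i < m -> 0 < lstart i <= n.
Hypothesis hend : forall i, i < m -> 0 < lend i <= n.

Lemma Rmax0 : Rmax 0 = 0.
Proof.
apply/eqP; rewrite -leqn0; apply/bigmax_leqP => i _.
by have := hstart (ltn_ord i); case: ifP => //; lia.
Qed.

Lemma Lmax_out : Lmax n.+1 = 0.
Proof.
apply/eqP; rewrite -leqn0; apply/bigmax_leqP => i _.
by have := hend (ltn_ord i); case: ifP => //; lia.
Qed.

Variables (r : nat) (base : nat -> int).
Definition Lbase := n + 1 + 2 * m.
Definition Rbase := Lbase + n.

Definition view_mem (regs Lf Rf : nat -> int) (a : nat) : int :=
  if r <= a < r + 16 then regs (a - r)
  else if Lbase < a <= Lbase + n then Lf (a - Lbase)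
  else if Rbase < a <= Rbase + n then Rf (a - Rbase)
  else base a.

Hypothesis regs_apart : 2 <= r <= 200 /\ (r + 16 <= n + 2 \/ Rbase + n < r).
Hypothesis base_n : base 0 = Posz n.
Hypothesis base_m : base 1 = Posz m.
Hypothesis base_start : forall i, i < m -> base (n + 2 + 2 * i) = Posz (lstart i).
Hypothesis base_end : forall i, i < m -> base (n + 2 + 2 * i + 1) = Posz (lend i).

Section View.
Variables (regs Lf Rf : nat -> int).

Lemma view_reg k : k < 16 -> view_mem regs Lf Rf (r + k) = regs k.
Proof. by move=> H; rewrite /view_mem ifT ?addKn //; apply/andP; split; lia. Qed.

Lemma view_L y : 1 <= y <= n -> view_mem regs Lf Rf (Lbase + y) = Lf y.
Proof.
move=> H; rewrite /view_mem ifF; last by move: regs_apart; rewrite /Rbase /Lbase; lia.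
by rewrite ifT ?addKn //; apply/andP; split; lia.
Qed.

Lemma view_R x : 1 <= x <= n -> view_mem regs Lf Rf (Rbase + x) = Rf x.
Proof.
move=> H; rewrite /view_mem ifF; last by move: regs_apart; rewrite /Rbase /Lbase; lia.
rewrite ifF; last by rewrite /Rbase /Lbase; lia.
by rewrite ifT ?addKn //; apply/andP; split; lia.
Qed.

Lemma view_input a : a < n + 2 + 2 * m -> ~~ (r <= a < r + 16) -> view_mem regs Lf Rf a = base a.
Proof.
move=> H1 H2; rewrite /view_mem (negbTE H2) ifF; last by rewrite /Lbase; lia.
by rewrite ifF // /Rbase /Lbase; lia.
Qed.

Lemma view_n : view_mem regs Lf Rf 0 = Posz n.
Proof. by rewrite view_input // ?base_n; move: regs_apart; lia. Qed.
Lemma view_m : view_mem regs Lf Rf 1 = Posz m.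
Proof.
rewrite /view_mem ifF; last by move: regs_apart; lia.
by rewrite ifF ?ifF // /Rbase /Lbase; lia.
Qed.
Lemma view_start i : i < m -> view_mem regs Lf Rf (n + 2 + 2 * i) = Posz (lstart i).
Proof.
by move=> H; rewrite view_input ?base_start //; move: regs_apart; rewrite /Rbase /Lbase; lia.
Qed.
Lemma view_end i : i < m -> view_mem regs Lf Rf (n + 2 + 2 * i + 1) = Posz (lend i).
Proof.
by move=> H; rewrite view_input ?base_end //; move: regs_apart; rewrite /Rbase /Lbase; lia.
Qed.

Lemma upd_view_reg k v : k < 16 ->
  upd (view_mem regs Lf Rf) (r + k) v = view_mem (setf regs k v) Lf Rf.
Proof.
move=> H; apply: functional_extensionality => a; rewrite /upd /view_mem /setf.
case: eqP => [->|Ha]; first by rewrite ifT ?addKn ?eqxx //; apply/andP; split; lia.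
case: ifP => // H2; rewrite ifF //; apply/eqP; lia.
Qed.

Lemma upd_view_L y v : 1 <= y <= n ->
  upd (view_mem regs Lf Rf) (Lbase + y) v = view_mem regs (setf Lf y v) Rf.
Proof.
move=> H; apply: functional_extensionality => a; rewrite /upd /view_mem /setf.
case: eqP => [->|Ha].
  rewrite ifF; last by move: regs_apart; rewrite /Rbase /Lbase; lia.
  by rewrite ifT ?addKn ?eqxx //; apply/andP; split; lia.
case: ifP => // H2; case: ifP => // H3; rewrite ifF //; apply/eqP; lia.
Qed.

Lemma upd_view_R x v : 1 <= x <= n ->
  upd (view_mem regs Lf Rf) (Rbase + x) v = view_mem regs Lf (setf Rf x v).
Proof.
move=> H; apply: functional_extensionality => a; rewrite /upd /view_mem /setf.
case: eqP => [->|Ha].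
  rewrite ifF; last by move: regs_apart; rewrite /Rbase /Lbase; lia.
  rewrite ifF; last by rewrite /Rbase /Lbase; lia.
  by rewrite ifT ?addKn ?eqxx //; apply/andP; split; lia.
case: ifP => // H2; case: ifP => // H3; case: ifP => // H4; rewrite ifF //; apply/eqP; lia.
Qed.

End View.

Hypothesis hmn : m <= n.

Definition write_ok (a : nat) (v : int) : Prop :=
  a < 1000 * n.+1 /\ (`|v| <= Posz (1000 * in_bound S))%R.

Lemma small_write_ok a v : a < 300 + 5 * n -> (`|v| <= Posz (100 + 5 * n))%R -> write_ok a v.
Proof. by rewrite /write_ok /in_bound; lia. Qed.

Definition const_regs (regs : nat -> int) :=
  [/\ regs 0 = 1%R, regs 1 = 2%R, regs 3 = Posz (n + 2 + 2 * m), regs 6 = Posz Lbase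
   & [/\ regs 7 = Posz Rbase, regs 10 = Posz m.+1, regs 14 = 0%R & regs 15 = (-1)%R]].

Hypothesis base_L : forall y, 0 < y <= n -> base (Lbase + y) = 0%R.
Hypothesis base_R : forall x, 0 < x <= n -> base (Rbase + x) = 0%R.

Lemma view_mem_base :
  base = view_mem (fun k => base (r + k)) (fun y => base (Lbase + y)) (fun x => base (Rbase + x)).
Proof.
apply: functional_extensionality => a; rewrite /view_mem.
case: ifP => [/andP[H _]|_]; first by rewrite subnKC.
case: ifP => [/andP[H _]|_]; first by rewrite subnKC // ltnW.
case: ifP => [/andP[H _]|_] //; by rewrite subnKC // ltnW.
Qed.

Variables (P : program) (l e : nat).
Hypothesis HC : code_at P l (LR_code r l e).

Ltac simpl_view := rewrite ?view_reg ?view_n ?view_m //; try rewrite /setf /=.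

Ltac arith_step j :=
  first [ apply: (reach_const HC (j := j) _ erefl)
        | apply: (reach_add HC (j := j) _ erefl)
        | apply: (reach_sub HC (j := j) _ erefl) ];
  [ by [] | simpl_view; apply: small_write_ok; lia | simpl_view; rewrite upd_view_reg // ].

Definition fill_inv k c := exists regs Lf Rf,
  [/\ c = Config (l + 12) (view_mem regs Lf Rf), const_regs regs,
      regs 2 = Posz (n + 2 + 2 * k), regs 4 = Posz k.+1
    & (forall x, 0 < x <= n -> Rf x = Posz (Rbucket k x)) /\
      (forall y, 0 < y <= n -> Lf y = Posz (Lbucket k y))].

Definition fill_inv_mid k c := exists regs Lf Rf,
  [/\ c = Config (l + 20) (view_mem regs Lf Rf), const_regs regs,
      regs 2 = Posz (n + 2 + 2 * k), regs 4 = Posz k.+1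
    & (forall x, 0 < x <= n -> Rf x = Posz (Rbucket k.+1 x)) /\
      (forall y, 0 < y <= n -> Lf y = Posz (Lbucket k y))].

Lemma init_regs T F : (forall c', fill_inv 0 c' -> reach P write_ok c' T F) ->
  reach P write_ok (Config l base) (12 + T) F.
Proof.
move=> K; rewrite view_mem_base -[l]addn0.
set regs := fun k => _; set Lf := fun y => _; set Rf := fun x => _.
arith_step 0; arith_step 1; arith_step 2; arith_step 3; arith_step 4; arith_step 5.
arith_step 6; arith_step 7; arith_step 8; arith_step 9; arith_step 10; arith_step 11.
apply: reach_mono (K _ _); first lia.
do 3 eexists; split; first reflexivity.
- by rewrite /const_regs /setf /= /Rbase /Lbase; split; try lia; split; lia.
- by rewrite /setf /=; lia.
- by rewrite /setf /=.
by split => x Hx; rewrite /Rf /Lf ?base_R ?base_L ?Rbucket0 ?Lbucket0.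
Qed.

Lemma fill_step_R k c T F : k < m -> fill_inv k c ->
  (forall c', fill_inv_mid k c' -> reach P write_ok c' T F) -> reach P write_ok c (6 + T) F.
Proof.
move=> Hk [regs [Lf [Rf [-> Hcr H2 H4 [HR HL]]]]] K.
have Hcr' := Hcr; case: Hcr' => [h0 h1 h3 h6 [h7 h10 h14 h15]].
have hsk := hstart Hk; have [hs1 hs2] := andP hsk.
have Rb_le := Rbucket_le k (lstart k).
apply: (reach_jlt_taken HC (j := 12)) => //; first by simpl_view; rewrite H2 h3; lia.
apply: (reach_load HC (j := 14) (x := n + 2 + 2 * k)) => //; first by simpl_view.
  rewrite view_start //; apply: small_write_ok; lia.
rewrite view_start // upd_view_reg //.
apply: (reach_add HC (j := 15)) => //.
  simpl_view; rewrite h7; apply: small_write_ok; rewrite /Rbase /Lbase; lia.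
simpl_view; rewrite h7 upd_view_reg //.
apply: (reach_load HC (j := 16) (x := Rbase + lstart k)) => //; first by simpl_view; lia.
  rewrite view_R ?HR //; apply: small_write_ok; lia.
rewrite view_R // HR // upd_view_reg //.
apply: (reach_jlt_taken HC (j := 17)) => //; first by simpl_view; rewrite H4; lia.
apply: (reach_store HC (j := 19) (x := Rbase + lstart k)) => //; first by simpl_view; lia.
  simpl_view; rewrite H4; apply: small_write_ok; rewrite /Rbase /Lbase; lia.
simpl_view; rewrite H4 upd_view_R //.
apply: K; do 3 eexists; split; first reflexivity.
- by move: Hcr; rewrite /const_regs /=.
- by [].
- by [].
split => // x Hx; rewrite /setf Rbucket_S; case: eqP => [->|/eqP Hne]; first by rewrite eqxx; lia.
by rewrite HR // ifF; [lia | apply/negbTE; rewrite eq_sym].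
Qed.

Lemma fill_next k regs Lf Rf T F : k < m -> const_regs regs ->
  regs 2 = Posz (n + 2 + 2 * k) -> regs 4 = Posz k.+1 ->
  (forall x, 0 < x <= n -> Rf x = Posz (Rbucket k.+1 x)) ->
  (forall y, 0 < y <= n -> Lf y = Posz (Lbucket k.+1 y)) ->
  (forall c', fill_inv k.+1 c' -> reach P write_ok c' T F) ->
  reach P write_ok (Config (l + 28) (view_mem regs Lf Rf)) (3 + T) F.
Proof.
move=> Hk Hcr H2 H4 HR HL K.
have Hcr' := Hcr; case: Hcr' => [h0 h1 h3 h6 [h7 h10 h14 h15]].
apply: (reach_add HC (j := 28)) => //.
  by simpl_view; rewrite H2 h1; apply: small_write_ok; lia.
simpl_view; rewrite H2 h1 upd_view_reg //.
apply: (reach_add HC (j := 29)) => //.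
  by simpl_view; rewrite H4 h0; apply: small_write_ok; lia.
simpl_view; rewrite H4 h0 upd_view_reg //.
apply: (reach_jmp HC (j := 30)) => //.
apply: K; do 3 eexists; split; first reflexivity.
- by move: Hcr; rewrite /const_regs /=.
- by rewrite /setf /=; lia.
- by rewrite /setf /=; lia.
by split.
Qed.

Lemma fill_step_L k c T F : k < m -> fill_inv_mid k c ->
  (forall c', fill_inv k.+1 c' -> reach P write_ok c' T F) -> reach P write_ok c (11 + T) F.
Proof.
move=> Hk [regs [Lf [Rf [-> Hcr H2 H4 [HR HL]]]]] K.
have Hcr' := Hcr; case: Hcr' => [h0 h1 h3 h6 [h7 h10 h14 h15]].
have hek := hend Hk; have [he1 he2] := andP hek.
apply: (reach_add HC (j := 20)) => //.
  by simpl_view; rewrite H2 h0; apply: small_write_ok; lia.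
simpl_view; rewrite H2 h0 upd_view_reg //.
apply: (reach_load HC (j := 21) (x := n + 2 + 2 * k + 1)) => //; first by simpl_view; lia.
  by rewrite view_end //; apply: small_write_ok; lia.
rewrite view_end // upd_view_reg //.
apply: (reach_add HC (j := 22)) => //.
  by simpl_view; rewrite h6; apply: small_write_ok; rewrite /Lbase; lia.
simpl_view; rewrite h6 upd_view_reg //.
apply: (reach_load HC (j := 23) (x := Lbase + lend k)) => //; first by simpl_view; lia.
  by rewrite view_L ?HL //; apply: small_write_ok; have := Lbucket_le k (lend k); lia.
rewrite view_L // HL // upd_view_reg //.
apply: (reach_sub HC (j := 24)) => //.
  by simpl_view; rewrite h10 H4; apply: small_write_ok; lia.
simpl_view; rewrite h10 H4 upd_view_reg //.
have HLS y : 0 < y <= n ->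
    Lbucket k.+1 y = if y == lend k then maxn (Lbucket k y) (m - k) else Lbucket k y.
  by move=> Hy; rewrite Lbucket_S eq_sym; case: eqP => // _; rewrite maxn0.
case: (ltnP (Lbucket k (lend k)) (m - k)) => Hc.
- apply: (reach_jlt_taken HC (j := 25)) => //; first by simpl_view; lia.
  apply: (reach_store HC (j := 27) (x := Lbase + lend k)) => //; first by simpl_view; lia.
    by simpl_view; apply: small_write_ok; rewrite /Lbase; lia.
  simpl_view; rewrite upd_view_L //.
  apply: reach_mono (fill_next Hk _ _ _ HR _ K);
    [lia | by move: Hcr; rewrite /const_regs /= | by rewrite /= H2 | by rewrite /= H4 |].
  move=> y Hy; rewrite /setf HLS //; case: eqP => [->|_]; last by rewrite HL.
  by rewrite (maxn_idPr (ltnW Hc)); lia.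
- apply: (reach_jlt_next HC (j := 25)) => //; first by simpl_view; lia.
  apply: (reach_jmp HC (j := 26)) => //; rewrite /setf /=.
  apply: reach_mono (fill_next Hk _ _ _ HR _ K);
    [lia | by move: Hcr; rewrite /const_regs /= | by rewrite /= H2 | by rewrite /= H4 |].
  move=> y Hy; rewrite HLS //; case: eqP => [->|_]; last by rewrite HL.
  by rewrite (maxn_idPl Hc) HL.
Qed.

Lemma fill_step k c T F : k < m -> fill_inv k c ->
  (forall c', fill_inv k.+1 c' -> reach P write_ok c' T F) -> reach P write_ok c (17 + T) F.
Proof.
move=> Hk HI K; rewrite (_ : 17 + T = 6 + (11 + T)) //.
by apply: (fill_step_R Hk HI) => c' H; apply: (fill_step_L Hk H).
Qed.

Definition rsweep_inv j c := exists regs Lf Rf,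
  [/\ c = Config (l + 35) (view_mem regs Lf Rf), const_regs regs,
      regs 11 = Posz (Rbase + j.+1), regs 12 = Posz (Rbase + n.+1)
    & [/\ regs 9 = Posz (Rmax j),
      (forall y, 0 < y <= n -> Lf y = Posz (Lbucket m y)) &
      (forall x, 0 < x <= n -> Rf x = if x <= j then Rresult x else Posz (Rbucket m x))]].

Definition rsweep_inv_mid j c := exists regs Lf Rf,
  [/\ c = Config (l + 41) (view_mem regs Lf Rf), const_regs regs,
      regs 11 = Posz (Rbase + j.+1), regs 12 = Posz (Rbase + n.+1)
    & [/\ regs 9 = Posz (Rmax j.+1),
      (forall y, 0 < y <= n -> Lf y = Posz (Lbucket m y)) &
      (forall x, 0 < x <= n -> Rf x = if x <= j then Rresult x else Posz (Rbucket m x))]].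

Lemma fill_exit c T F : fill_inv m c ->
  (forall c', rsweep_inv 0 c' -> reach P write_ok c' T F) -> reach P write_ok c (6 + T) F.
Proof.
move=> [regs [Lf [Rf [-> Hcr H2 H4 [HR HL]]]]] K.
have Hcr' := Hcr; case: Hcr' => [h0 h1 h3 h6 [h7 h10 h14 h15]].
apply: (reach_jlt_next HC (j := 12)) => //; first by simpl_view; rewrite H2 h3; lia.
apply: (reach_jmp HC (j := 13)) => //.
apply: (reach_add HC (j := 31)) => //.
  simpl_view; rewrite h7 h0; apply: small_write_ok; rewrite /Rbase /Lbase; lia.
simpl_view; rewrite h7 h0 upd_view_reg //.
apply: (reach_add HC (j := 32)) => //.
  simpl_view; rewrite h7; apply: small_write_ok; rewrite /Rbase /Lbase; lia.
simpl_view; rewrite h7 upd_view_reg //.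
apply: (reach_add HC (j := 33)) => //.
  simpl_view; rewrite h0; apply: small_write_ok; rewrite /Rbase /Lbase; lia.
simpl_view; rewrite h0 upd_view_reg //.
apply: (reach_const HC (j := 34)) => //; first by apply: small_write_ok; lia.
rewrite upd_view_reg //.
apply: reach_mono (K _ _); first lia.
do 3 eexists; split; first reflexivity.
- by move: Hcr; rewrite /const_regs /setf /=.
- by rewrite /setf /=; lia.
- by rewrite /setf /=; lia.
split => //; first by rewrite /setf /= Rmax0.
by move=> x Hx; rewrite HR // ifF //; lia.
Qed.

Lemma rsweep_max j c T F : j < n -> rsweep_inv j c ->
  (forall c', rsweep_inv_mid j c' -> reach P write_ok c' T F) -> reach P write_ok c (4 + T) F.
Proof.
move=> Hj [regs [Lf [Rf [-> Hcr H11 H12 [H9 HL HR]]]]] K.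
have Hcr' := Hcr; case: Hcr' => [h0 h1 h3 h6 [h7 h10 h14 h15]].
have Hj1 : 0 < j.+1 <= n by lia.
have hRR := Rmax_S j; have hRBm := Rbucket_le m j.+1; have hRRm := Rmax_le j.
apply: (reach_jlt_taken HC (j := 35)) => //; first by simpl_view; rewrite H11 H12; lia.
apply: (reach_load HC (j := 37) (x := Rbase + j.+1)) => //; first by simpl_view.
  rewrite view_R ?HR ?ltnn //; apply: small_write_ok; lia.
rewrite view_R ?HR ?ltnn // upd_view_reg //.
case: (ltnP (Rmax j) (Rbucket m j.+1)) => Hc.
- apply: (reach_jlt_taken HC (j := 38)) => //; first by simpl_view; rewrite H9; lia.
  apply: (reach_add HC (j := 40)) => //.
    simpl_view; rewrite h14; apply: small_write_ok; lia.
  simpl_view; rewrite h14 upd_view_reg //.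
  apply: reach_mono (K _ _); first lia.
  do 3 eexists; split; first reflexivity.
  + by move: Hcr; rewrite /const_regs /setf /=.
  + by rewrite /setf /=.
  + by rewrite /setf /=.
  split => //; rewrite /setf /= hRR; lia.
- apply: (reach_jlt_next HC (j := 38)) => //; first by simpl_view; rewrite H9; lia.
  apply: (reach_jmp HC (j := 39)) => //.
  apply: reach_mono (K _ _); first lia.
  do 3 eexists; split; first reflexivity.
  + by move: Hcr; rewrite /const_regs /setf /=.
  + by rewrite /setf /=.
  + by rewrite /setf /=.
  split => //; rewrite /setf /= hRR; lia.
Qed.

Lemma rsweep_next j regs Lf Rf T F : j < n -> const_regs regs ->
  regs 11 = Posz (Rbase + j.+1) -> regs 12 = Posz (Rbase + n.+1) -> regs 9 = Posz (Rmax j.+1) ->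
  (forall y, 0 < y <= n -> Lf y = Posz (Lbucket m y)) ->
  (forall x, 0 < x <= n -> Rf x = if x <= j.+1 then Rresult x else Posz (Rbucket m x)) ->
  (forall c', rsweep_inv j.+1 c' -> reach P write_ok c' T F) ->
  reach P write_ok (Config (l + 43) (view_mem regs Lf Rf)) (2 + T) F.
Proof.
move=> Hj Hcr H11 H12 H9 HL HR K.
have Hcr' := Hcr; case: Hcr' => [h0 h1 h3 h6 [h7 h10 h14 h15]].
apply: (reach_add HC (j := 43)) => //.
  by simpl_view; rewrite H11 h0; apply: small_write_ok; rewrite /Rbase /Lbase; lia.
simpl_view; rewrite H11 h0 upd_view_reg //.
apply: (reach_jmp HC (j := 44)) => //.
apply: K; do 3 eexists; split; first reflexivity.
- by move: Hcr; rewrite /const_regs /setf /=.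
- by rewrite /setf /=; lia.
- by rewrite /setf /=.
by split.
Qed.

Lemma rsweep_store j c T F : j < n -> rsweep_inv_mid j c ->
  (forall c', rsweep_inv j.+1 c' -> reach P write_ok c' T F) -> reach P write_ok c (5 + T) F.
Proof.
move=> Hj [regs [Lf [Rf [-> Hcr H11 H12 [H9 HL HR]]]]] K.
have Hcr' := Hcr; case: Hcr' => [h0 h1 h3 h6 [h7 h10 h14 h15]].
have hRRm := Rmax_le j.+1.
have Hj1 : 0 < j.+1 <= n by lia.
have HRf v : v = Rresult j.+1 -> forall x, 0 < x <= n ->
    setf Rf j.+1 v x = if x <= j.+1 then Rresult x else Posz (Rbucket m x).
  move=> -> x Hx; rewrite /setf; case: eqP => [->|Hne]; first by rewrite leqnn.
  have E : (x <= j.+1) = (x <= j) by apply/idP/idP; lia.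
  by rewrite HR // E.
case: (posnP (Rmax j.+1)) => Hc.
- apply: (reach_jlt_taken HC (j := 41)) => //; first by simpl_view; rewrite H9 h0; lia.
  apply: (reach_store HC (j := 45) (x := Rbase + j.+1)) => //; first by simpl_view.
    by simpl_view; rewrite h15; apply: small_write_ok; rewrite /Rbase /Lbase; lia.
  simpl_view; rewrite h15 upd_view_R //.
  apply: (reach_jmp HC (j := 46)) => //.
  apply: reach_mono (rsweep_next Hj Hcr H11 H12 H9 HL _ K); first lia.
  by apply: (HRf (-1)%R); rewrite /Rresult Hc.
- apply: (reach_jlt_next HC (j := 41)) => //; first by simpl_view; rewrite H9 h0; lia.
  apply: (reach_store HC (j := 42) (x := Rbase + j.+1)) => //; first by simpl_view.
    by simpl_view; rewrite H9; apply: small_write_ok; rewrite /Rbase /Lbase; lia.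
  simpl_view; rewrite H9 upd_view_R //.
  apply: reach_mono (rsweep_next Hj Hcr H11 H12 H9 HL _ K); first lia.
  by apply: HRf; rewrite /Rresult ifF //; lia.
Qed.

Lemma rsweep_step j c T F : j < n -> rsweep_inv j c ->
  (forall c', rsweep_inv j.+1 c' -> reach P write_ok c' T F) -> reach P write_ok c (9 + T) F.
Proof.
move=> Hj HI K; rewrite (_ : 9 + T = 4 + (5 + T)) //.
by apply: (rsweep_max Hj HI) => c' H; apply: (rsweep_store Hj H K).
Qed.

Definition lsweep_inv j c := exists regs Lf Rf,
  [/\ c = Config (l + 49) (view_mem regs Lf Rf), const_regs regs,
      regs 11 = Posz (Lbase + (n - j)), regs 9 = Posz (Lmax (n - j).+1)
    & (forall x, 0 < x <= n -> Rf x = Rresult x) /\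
      (forall y, 0 < y <= n -> Lf y = if n - j < y then Lresult y else Posz (Lbucket m y))].

Definition lsweep_inv_mid j c := exists regs Lf Rf,
  [/\ c = Config (l + 55) (view_mem regs Lf Rf), const_regs regs,
      regs 11 = Posz (Lbase + (n - j)), regs 9 = Posz (Lmax (n - j))
    & (forall x, 0 < x <= n -> Rf x = Rresult x) /\
      (forall y, 0 < y <= n -> Lf y = if n - j < y then Lresult y else Posz (Lbucket m y))].

Lemma rsweep_exit c T F : rsweep_inv n c ->
  (forall c', lsweep_inv 0 c' -> reach P write_ok c' T F) -> reach P write_ok c (4 + T) F.
Proof.
move=> [regs [Lf [Rf [-> Hcr H11 H12 [H9 HL HR]]]]] K.
have Hcr' := Hcr; case: Hcr' => [h0 h1 h3 h6 [h7 h10 h14 h15]].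
apply: (reach_jlt_next HC (j := 35)) => //; first by simpl_view; rewrite H11 H12; lia.
apply: (reach_jmp HC (j := 36)) => //.
apply: (reach_add HC (j := 47)) => //.
  simpl_view; rewrite h6; apply: small_write_ok; rewrite /Rbase /Lbase; lia.
simpl_view; rewrite h6 upd_view_reg //.
apply: (reach_const HC (j := 48)) => //; first by apply: small_write_ok; lia.
rewrite upd_view_reg //.
apply: reach_mono (K _ _); first lia.
do 3 eexists; split; first reflexivity.
- by move: Hcr; rewrite /const_regs /setf /=.
- by rewrite /setf /= subn0; lia.
- by rewrite /setf /= subn0 Lmax_out.
split => x Hx; first by rewrite HR // ifT //; lia.
by rewrite HL // subn0 ifF //; lia.
Qed.

Lemma lsweep_max j c T F : j < n -> lsweep_inv j c ->
  (forall c', lsweep_inv_mid j c' -> reach P write_ok c' T F) -> reach P write_ok c (4 + T) F.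
Proof.
move=> Hj [regs [Lf [Rf [-> Hcr H11 H9 [HR HL]]]]] K.
have Hcr' := Hcr; case: Hcr' => [h0 h1 h3 h6 [h7 h10 h14 h15]].
have Hj1 : 0 < n - j <= n by lia.
have hLL := Lmax_S (n - j); have hLBm := Lbucket_le m (n - j); have hLLm := Lmax_le (n - j).+1.
apply: (reach_jlt_taken HC (j := 49)) => //; first by simpl_view; rewrite H11 h6; lia.
apply: (reach_load HC (j := 51) (x := Lbase + (n - j))) => //; first by simpl_view.
  rewrite view_L ?HL ?ltnn //; apply: small_write_ok; lia.
rewrite view_L ?HL ?ltnn // upd_view_reg //.
case: (ltnP (Lmax (n - j).+1) (Lbucket m (n - j))) => Hc.
- apply: (reach_jlt_taken HC (j := 52)) => //; first by simpl_view; rewrite H9; lia.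
  apply: (reach_add HC (j := 54)) => //.
    simpl_view; rewrite h14; apply: small_write_ok; lia.
  simpl_view; rewrite h14 upd_view_reg //.
  apply: reach_mono (K _ _); first lia.
  do 3 eexists; split; first reflexivity.
  + by move: Hcr; rewrite /const_regs /setf /=.
  + by rewrite /setf /=.
  + by rewrite /setf /= hLL; lia.
  by split.
- apply: (reach_jlt_next HC (j := 52)) => //; first by simpl_view; rewrite H9; lia.
  apply: (reach_jmp HC (j := 53)) => //.
  apply: reach_mono (K _ _); first lia.
  do 3 eexists; split; first reflexivity.
  + by move: Hcr; rewrite /const_regs /setf /=.
  + by rewrite /setf /=.
  + by rewrite /setf /= hLL; lia.
  by split.
Qed.

Lemma lsweep_next j regs Lf Rf T F : j < n -> const_regs regs ->
  regs 11 = Posz (Lbase + (n - j)) -> regs 9 = Posz (Lmax (n - j)) ->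
  (forall x, 0 < x <= n -> Rf x = Rresult x) ->
  (forall y, 0 < y <= n -> Lf y = if n - j.+1 < y then Lresult y else Posz (Lbucket m y)) ->
  (forall c', lsweep_inv j.+1 c' -> reach P write_ok c' T F) ->
  reach P write_ok (Config (l + 58) (view_mem regs Lf Rf)) (2 + T) F.
Proof.
move=> Hj Hcr H11 H9 HR HL K.
have Hcr' := Hcr; case: Hcr' => [h0 h1 h3 h6 [h7 h10 h14 h15]].
have E1 : (n - j.+1).+1 = n - j by lia.
apply: (reach_sub HC (j := 58)) => //.
  by simpl_view; rewrite H11 h0; apply: small_write_ok; rewrite /Lbase; lia.
simpl_view; rewrite H11 h0 upd_view_reg //.
apply: (reach_jmp HC (j := 59)) => //.
apply: K; do 3 eexists; split; first reflexivity.
- by move: Hcr; rewrite /const_regs /setf /=.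
- by rewrite /setf /=; lia.
- by rewrite /setf /= E1.
by split.
Qed.

Lemma lsweep_store j c T F : j < n -> lsweep_inv_mid j c ->
  (forall c', lsweep_inv j.+1 c' -> reach P write_ok c' T F) -> reach P write_ok c (5 + T) F.
Proof.
move=> Hj [regs [Lf [Rf [-> Hcr H11 H9 [HR HL]]]]] K.
have Hcr' := Hcr; case: Hcr' => [h0 h1 h3 h6 [h7 h10 h14 h15]].
have hLLm := Lmax_le (n - j).
have Hj1 : 0 < n - j <= n by lia.
have HLf v : v = Lresult (n - j) -> forall y, 0 < y <= n ->
    setf Lf (n - j) v y = if n - j.+1 < y then Lresult y else Posz (Lbucket m y).
  move=> -> y Hy; rewrite /setf; case: eqP => [->|Hne]; first by rewrite ifT //; lia.
  have E : (n - j.+1 < y) = (n - j < y) by apply/idP/idP; lia.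
  by rewrite HL // E.
case: (posnP (Lmax (n - j))) => Hc.
- apply: (reach_jlt_taken HC (j := 55)) => //; first by simpl_view; rewrite H9 h0; lia.
  apply: (reach_store HC (j := 60) (x := Lbase + (n - j))) => //; first by simpl_view.
    by simpl_view; rewrite h15; apply: small_write_ok; rewrite /Lbase; lia.
  simpl_view; rewrite h15 upd_view_L //.
  apply: (reach_jmp HC (j := 61)) => //.
  apply: reach_mono (lsweep_next Hj Hcr H11 H9 HR _ K); first lia.
  by apply: (HLf (-1)%R); rewrite /Lresult Hc.
- apply: (reach_jlt_next HC (j := 55)) => //; first by simpl_view; rewrite H9 h0; lia.
  apply: (reach_sub HC (j := 56)) => //.
    by simpl_view; rewrite H9 h10; apply: small_write_ok; lia.
  simpl_view; rewrite H9 h10 upd_view_reg //.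
  apply: (reach_store HC (j := 57) (x := Lbase + (n - j))) => //; first by simpl_view.
    by simpl_view; apply: small_write_ok; rewrite /Lbase; lia.
  simpl_view; rewrite upd_view_L //.
  apply: reach_mono (lsweep_next Hj _ _ _ HR _ K);
    [lia | by move: Hcr; rewrite /const_regs /= | by rewrite /= H11 | by rewrite /= H9 |].
  by apply: HLf; rewrite /Lresult ifF; lia.
Qed.

Lemma lsweep_step j c T F : j < n -> lsweep_inv j c ->
  (forall c', lsweep_inv j.+1 c' -> reach P write_ok c' T F) -> reach P write_ok c (9 + T) F.
Proof.
move=> Hj HI K; rewrite (_ : 9 + T = 4 + (5 + T)) //.
by apply: (lsweep_max Hj HI) => c' H; apply: (lsweep_store Hj H K).
Qed.

Definition final_state c :=
  [/\ pc c = e,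
      forall y, 0 < y <= n -> memory c (Lbase + y) = Lresult y &
      forall x, 0 < x <= n -> memory c (Rbase + x) = Rresult x].

Lemma lsweep_exit c T : lsweep_inv n c -> reach P write_ok c (2 + T) final_state.
Proof.
move=> [regs [Lf [Rf [-> Hcr H11 H9 [HR HL]]]]].
have Hcr' := Hcr; case: Hcr' => [h0 h1 h3 h6 [h7 h10 h14 h15]].
apply: (reach_jlt_next HC (j := 49)) => //; first by simpl_view; rewrite H11 h6; lia.
apply: (reach_jmp HC (j := 50)) => //.
apply: reach_refl; split => //= [y Hy|x Hx]; first by rewrite view_L // HL // ifT //; lia.
by rewrite view_R // HR.
Qed.

Lemma LR_code_correct : reach P write_ok (Config l base) (24 + 17 * m + 18 * n) final_state.
Proof.
apply: reach_mono (init_regs (T := 17 * m + (6 + (9 * n + (4 + (9 * n + 2))))) _); first lia.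
move=> c0 H0; apply: (reach_loop fill_step) => // c1 H1.
apply: (fill_exit H1) => c2 H2; apply: (reach_loop rsweep_step) => // c3 H3.
apply: (rsweep_exit H3) => c4 H4; apply: (reach_loop lsweep_step) => // c5 H5.
exact: lsweep_exit H5.
Qed.
End Correctness.

(** A copy of the code with its registers at 2..17 overwrites letters of S,
    which is harmless, unless n < 16, where it would hit LLRc; that case
    jumps to a second copy with its registers at 200, above the output. *)
Definition dispatch : program := [:: IConst 2 16; IJlt 0 2 64].
Definition LR_program : program := dispatch ++ LR_code 2 2 126 ++ LR_code 200 64 126.

Lemma code_dispatch : code_at LR_program 0 dispatch.
Proof. by split => // j; case: j => [|[|]]. Qed.

Lemma code_low : code_at LR_program 2 (LR_code 2 2 126).
Proof.
split => // j Hj; rewrite /LR_program nth_cat.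
rewrite (_ : (2 + j < size dispatch) = false); last by rewrite /=; lia.
rewrite nth_cat (_ : (2 + j - size dispatch) = j); last by rewrite /=; lia.
by rewrite Hj.
Qed.

Lemma code_high : code_at LR_program 64 (LR_code 200 64 126).
Proof. by split => // j Hj; rewrite /LR_program nth_cat. Qed.

Lemma LLRc_bounds S A : LLRc_of S A ->
  forall i, i < size A -> 0 < lstart A i <= size S /\ 0 < lend A i <= size S.
Proof.
move=> [_ HA] i Hi; have := (HA (nth (0,0) A i)).1 (mem_nth _ Hi).
case=> [[[H1 H2 H3 _] _] _]; rewrite /lstart /lend.
by split; apply/andP; split => //; [exact: leq_trans H2 H3 | exact: leq_trans H1 H2].
Qed.

Lemma LLRc_size_le S A : LLRc_of S A -> size A <= size S.
Proof.
move=> HA; have uniq_starts : uniq (map fst A).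
  by apply: (sorted_uniq ltn_trans ltnn); case: HA.
rewrite -(size_map fst) -(size_iota 1 (size S)).
apply: uniq_leq_size => // x /mapP [p Hp ->].
have [i Hi ->] : exists2 i, i < size A & p = nth (0,0) A i.
  by exists (index p A); [rewrite index_mem | rewrite nth_index].
by have := (LLRc_bounds HA Hi).1; rewrite /lstart mem_iota; lia.
Qed.

Section Dispatch.
Variables (S : seq nat) (A : seq (nat * nat)).
Local Notation n := (size S).
Local Notation m := (size A).
Hypothesis Hn : 0 < n.
Definition dispatch_mem := upd (init_mem S A) 2 16.

Lemma dispatch_mem_n : dispatch_mem 0 = Posz n. Proof. by []. Qed.
Lemma dispatch_mem_m : dispatch_mem 1 = Posz m. Proof. by []. Qed.
Lemma dispatch_mem_start i : i < m -> dispatch_mem (n + 2 + 2 * i) = Posz (lstart A i).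
Proof.
move=> Hi; rewrite /dispatch_mem /upd /init_mem.
do 4 (rewrite ifF; last lia); rewrite ifT; last lia.
rewrite (_ : n + 2 + 2 * i - (n + 2) = i.*2); last lia.
by rewrite doubleK odd_double.
Qed.
Lemma dispatch_mem_end i : i < m -> dispatch_mem (n + 2 + 2 * i + 1) = Posz (lend A i).
Proof.
move=> Hi; rewrite /dispatch_mem /upd /init_mem.
do 4 (rewrite ifF; last lia); rewrite ifT; last lia.
rewrite (_ : n + 2 + 2 * i + 1 - (n + 2) = (i.*2).+1); last lia.
by rewrite /= uphalf_double odd_double.
Qed.
Lemma dispatch_mem_L y : 0 < y <= n -> dispatch_mem (Lbase S A + y) = 0%R.
Proof.
move=> Hy; rewrite /dispatch_mem /upd /init_mem /Lbase.
by do 5 (rewrite ifF; last lia).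
Qed.
Lemma dispatch_mem_R x : 0 < x <= n -> dispatch_mem (Rbase S A + x) = 0%R.
Proof.
move=> Hy; rewrite /dispatch_mem /upd /init_mem /Rbase /Lbase.
by do 5 (rewrite ifF; last lia).
Qed.
End Dispatch.

Lemma LR_program_correct S A : LLRc_of S A -> 0 < size A ->
  reach LR_program (write_ok S) (init_config S A)
    (24 + 17 * size A + 18 * size S).+2 (final_state S A 126).
Proof.
move=> HA Hm; have hmn := LLRc_size_le HA.
have hst i (Hi : i < size A) := (LLRc_bounds HA Hi).1.
have hen i (Hi : i < size A) := (LLRc_bounds HA Hi).2.
have Hn : 0 < size S by have := hst 0 Hm; lia.
have code_run r l (Hr : 2 <= r <= 200 /\ (r + 16 <= size S + 2 \/ Rbase S A + size S < r))
    (HC : code_at LR_program l (LR_code r l 126)) :=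
  LR_code_correct hst hen Hr (dispatch_mem_n S A) (dispatch_mem_m S A)
    (@dispatch_mem_start S A Hn) (@dispatch_mem_end S A Hn) hmn
    (@dispatch_mem_L S A Hn) (@dispatch_mem_R S A Hn) HC.
apply: (reach_const code_dispatch (j := 0)) => //; first by rewrite /write_ok /in_bound; lia.
case: (ltnP (size S) 16) => Hs.
- apply: (reach_jlt_taken code_dispatch (j := 1) (a := 0) (b := 2) (lab := 64)) => //.
  by apply: code_run code_high; split => //; right; rewrite /Rbase /Lbase; lia.
- apply: (reach_jlt_next code_dispatch (j := 1) (a := 0) (b := 2) (lab := 64)) => //.
    by rewrite /upd /init_mem /=; lia.
  by apply: code_run code_low; split => //; left; lia.
Qed.

Theorem lemma7 :
  exists (P : program) (c : nat),
  forall (S : seq nat) (A : seq (nat * nat)),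
    LLRc_of S A -> 1 <= size A ->
    exists (t : nat) (cf : config),
      [/\ t <= c * (size S).+1,
          run P t (init_config S A) = Some cf /\ halted P cf,
          (forall y, 1 <= y <= size S -> Lval A y (memory cf (outL S A y))),
          (forall x, 1 <= x <= size S -> Rval A x (memory cf (outR S A x)))
        & (forall t' c', t' < t -> run P t' (init_config S A) = Some c' ->
             forall a v, step_write P c' = Some (a, v) ->
               a < c * (size S).+1 /\ (`|v| <= (Posz (c * in_bound S)))%R)].
Proof.
exists LR_program, 1000 => S A HA Hm.
have [cf [t [Ht [Hrun Hw] [Hpc HL HR]]]] := LR_program_correct HA Hm.
have hmn := LLRc_size_le HA.
exists t, cf; split => //.
- by move: Ht; lia.
- by rewrite /halted Hpc.
- move=> y Hy; rewrite (_ : outL S A y = Lbase S A + y); last by rewrite /outL /Lbase; lia.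
  by rewrite HL //; apply: Lresult_correct.
- move=> x Hx; rewrite (_ : outR S A x = Rbase S A + x); last by rewrite /outR /Rbase /Lbase; lia.
  by rewrite HR //; apply: Rresult_correct.
Qed.
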